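(* Let $n\ge1$, let $x_1,\dots,x_n$ be nonzero real numbers and $a_1,\dots,a_n>0$. Put $P=\sum_{j=1}^n \frac{x_j^2}{a_j}$, $Q=\sum_{j=1}^n a_j$, $$A=\frac{1}{8}\sqrt{PQ}\cdot \sum_{i=1}^n \left(\frac{x_i^2}{a_iP}-\frac{a_i}{Q}\right)^2,$$ $$m=\min_{1\le i\le n}\min\left\{\frac{x_i^2}{a_iP},\frac{a_i}{Q}\right\},\qquad M=\max_{1\le i\le n}\max\left\{\frac{x_i^2}{a_iP},\frac{a_i}{Q}\right\}.$$ Then $$\frac{1}{Q}\left(\frac{A^2}{M^2}+\frac{2A}{M}\sum_{i=1}^n |x_i|\right)\leq \sum_{i=1}^n\frac{x_i^2}{a_i}-\frac{(|x_1|+\dots+|x_n|)^2}{a_1+\dots+a_n}\leq \frac{1}{Q}\left(\frac{A^2}{m^2}+\frac{2A}{m}\sum_{i=1}^n |x_i|\right).$$ *)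

(* Stdlib reals. Indices are 0..n-1 (paper's 1..n shifted). *)
From Stdlib Require Import Reals.
Open Scope R_scope.

Fixpoint rsum (n : nat) (f : nat -> R) : R :=
  match n with
  | O => 0
  | S k => rsum k f + f k
  end.

Fixpoint rmin_upto (k : nat) (f : nat -> R) : R :=
  match k with
  | O => f O
  | S j => Rmin (rmin_upto j f) (f (S j))
  end.

Fixpoint rmax_upto (k : nat) (f : nat -> R) : R :=
  match k with
  | O => f O
  | S j => Rmax (rmax_upto j f) (f (S j))
  end.

From Stdlib Require Import Reals Lra Lia.
Open Scope R_scope.

(* Normalize to probability vectors [p_i = x_i^2 / (a_i P)] and [q_i = a_i / Q]; their
   geometric means are [t_i = |x_i| / sqrt (P Q)], so that
   [P - S^2/Q = (sqrt(PQ) - S)(sqrt(PQ) + S) / Q] with [sum (p_i + q_i - 2 t_i) = 2 (1 - S / sqrt(PQ))].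
   Termwise, [(p_i - q_i)^2 = (sqrt p_i - sqrt q_i)^2 (sqrt p_i + sqrt q_i)^2] and the second factor
   lies between [4m] and [4M]; summing gives [m (sqrt(PQ) - S) <= A <= M (sqrt(PQ) - S)], and the
   claim follows because [y |-> y^2 + 2 y S] is increasing for [y >= 0]. *)

Lemma rsum_ext n f g : (forall i, (i < n)%nat -> f i = g i) -> rsum n f = rsum n g.
Proof.
induction n as [|n IH]; intros Hfg; simpl; [reflexivity|].
rewrite IH by (intros; apply Hfg; lia).
now rewrite Hfg by lia.
Qed.

Lemma rsum_le n f g : (forall i, (i < n)%nat -> f i <= g i) -> rsum n f <= rsum n g.
Proof.
induction n as [|n IH]; intros Hfg; simpl; [lra|].
apply Rplus_le_compat; [apply IH; intros; apply Hfg|apply Hfg]; lia.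
Qed.

Lemma rsum_nonneg n f : (forall i, (i < n)%nat -> 0 <= f i) -> 0 <= rsum n f.
Proof.
induction n as [|n IH]; intros Hf; simpl; [lra|].
apply Rplus_le_le_0_compat; [apply IH; intros; apply Hf|apply Hf]; lia.
Qed.

Lemma rsum_pos n f : (1 <= n)%nat -> (forall i, (i < n)%nat -> 0 < f i) -> 0 < rsum n f.
Proof.
destruct n as [|n]; intros Hn Hf; simpl; [lia|].
assert (0 <= rsum n f) by (apply rsum_nonneg; intros; apply Rlt_le, Hf; lia).
specialize (Hf n ltac:(lia)); lra.
Qed.

Lemma rsum_add n f g : rsum n (fun i => f i + g i) = rsum n f + rsum n g.
Proof. induction n; simpl; [|rewrite IHn]; ring. Qed.

Lemma rsum_sub n f g : rsum n (fun i => f i - g i) = rsum n f - rsum n g.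
Proof. induction n; simpl; [|rewrite IHn]; ring. Qed.

Lemma rsum_scal n c f : rsum n (fun i => c * f i) = c * rsum n f.
Proof. induction n; simpl; [|rewrite IHn]; ring. Qed.

Lemma rsum_div n f c : rsum n (fun i => f i / c) = rsum n f / c.
Proof. induction n; simpl; [|rewrite IHn]; unfold Rdiv; ring. Qed.

Lemma rsum_normalize n f c : c <> 0 -> rsum n f = c -> rsum n (fun i => f i / c) = 1.
Proof. intros Hc Hf; rewrite rsum_div, Hf; field; exact Hc. Qed.

Lemma rmin_upto_le k f i : (i <= k)%nat -> rmin_upto k f <= f i.
Proof.
induction k as [|k IH]; intros Hi; simpl.
- replace i with 0%nat by lia; lra.
- destruct (Nat.eq_dec i (S k)) as [->|Hne]; [apply Rmin_r|].
  eapply Rle_trans; [apply Rmin_l|apply IH; lia].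
Qed.

Lemma rmax_upto_ge k f i : (i <= k)%nat -> f i <= rmax_upto k f.
Proof.
induction k as [|k IH]; intros Hi; simpl.
- replace i with 0%nat by lia; lra.
- destruct (Nat.eq_dec i (S k)) as [->|Hne]; [apply Rmax_r|].
  eapply Rle_trans; [apply IH; lia|apply Rmax_l].
Qed.

Lemma rmin_rmax_upto_bounds k f g i : (i <= k)%nat ->
  let m := rmin_upto k (fun j => Rmin (f j) (g j)) in
  let M := rmax_upto k (fun j => Rmax (f j) (g j)) in
  m <= f i <= M /\ m <= g i <= M.
Proof.
intros Hi m M.
pose proof (rmin_upto_le k (fun j => Rmin (f j) (g j)) i Hi) as Hm.
pose proof (rmax_upto_ge k (fun j => Rmax (f j) (g j)) i Hi) as HM.
simpl in Hm, HM; fold m in Hm; fold M in HM.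
pose proof (Rmin_l (f i) (g i)); pose proof (Rmin_r (f i) (g i)).
pose proof (Rmax_l (f i) (g i)); pose proof (Rmax_r (f i) (g i)).
lra.
Qed.

Lemma rmin_upto_pos k f : (forall i, (i <= k)%nat -> 0 < f i) -> 0 < rmin_upto k f.
Proof.
induction k as [|k IH]; intros Hf; simpl; [apply Hf; lia|].
apply Rmin_glb_lt; [apply IH; intros|]; apply Hf; lia.
Qed.

Section GeometricMean.

Variables p q t : R.
Hypotheses (Ht : 0 <= t) (Htt : t * t = p * q).

Lemma sqr_sub_gm : (p - q) ^ 2 = (p + q - 2 * t) * (p + q + 2 * t).
Proof. transitivity ((p + q) ^ 2 - 4 * (t * t)); [rewrite Htt|]; ring. Qed.

Lemma gm_gap_nonneg : 0 <= p -> 0 <= q -> 0 <= p + q - 2 * t.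
Proof.
intros Hp Hq; destruct (Rle_lt_dec 0 (p + q - 2 * t)) as [Hgap|Hgap]; [exact Hgap|].
assert (Hprod : (p + q - 2 * t) * (p + q + 2 * t) < 0) by (apply Rmult_neg_pos; lra).
rewrite <- sqr_sub_gm in Hprod; pose proof (pow2_ge_0 (p - q)); lra.
Qed.

Lemma sqr_sub_gm_bounds m M : 0 <= m -> m <= p <= M -> m <= q <= M ->
  4 * m * (p + q - 2 * t) <= (p - q) ^ 2 <= 4 * M * (p + q - 2 * t).
Proof.
intros Hm Hp Hq.
assert (Hgap : 0 <= p + q - 2 * t) by (apply gm_gap_nonneg; lra).
assert (Hmt : m <= t <= M) by nra.
rewrite sqr_sub_gm; split; nra.
Qed.

End GeometricMean.

Section Distributions.

Variables (n : nat) (p q t : nat -> R) (m M : R).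
Hypotheses (Hm : 0 <= m)
  (Hp : forall i, (i < n)%nat -> m <= p i <= M)
  (Hq : forall i, (i < n)%nat -> m <= q i <= M)
  (Ht : forall i, (i < n)%nat -> 0 <= t i)
  (Htt : forall i, (i < n)%nat -> t i * t i = p i * q i)
  (Hsp : rsum n p = 1) (Hsq : rsum n q = 1).

Lemma rsum_gm_gap : rsum n (fun i => p i + q i - 2 * t i) = 2 - 2 * rsum n t.
Proof. now rewrite rsum_sub, rsum_add, rsum_scal, Hsp, Hsq. Qed.

Lemma rsum_sqr_sub_bounds :
  4 * m * (2 - 2 * rsum n t) <= rsum n (fun i => (p i - q i) ^ 2)
  <= 4 * M * (2 - 2 * rsum n t).
Proof.
rewrite <- rsum_gm_gap, <- !rsum_scal.
split; apply rsum_le; intros i Hi;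
  destruct (sqr_sub_gm_bounds _ _ _ (Ht i Hi) (Htt i Hi) m M Hm (Hp i Hi) (Hq i Hi));
  assumption.
Qed.

End Distributions.

Lemma gm_of_normalized x a P Q : 0 < a -> 0 < P -> 0 < Q ->
  Rabs x / sqrt (P * Q) * (Rabs x / sqrt (P * Q)) = x ^ 2 / (a * P) * (a / Q).
Proof.
intros Ha HP HQ.
assert (HR : 0 < sqrt (P * Q)) by (apply sqrt_lt_R0; nra).
replace (Rabs x / sqrt (P * Q) * (Rabs x / sqrt (P * Q)))
  with (Rabs x ^ 2 / (sqrt (P * Q) * sqrt (P * Q))) by (field; lra).
rewrite pow2_abs, sqrt_sqrt by nra; field; lra.
Qed.

Lemma diff_sqr_bounds R S A m M : 0 <= S -> 0 < m -> 0 < M -> 0 <= A ->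
  m * (R - S) <= A <= M * (R - S) ->
  A ^ 2 / M ^ 2 + 2 * A / M * S <= R * R - S * S <= A ^ 2 / m ^ 2 + 2 * A / m * S.
Proof.
intros HS Hm HM HA [Hlo Hhi].
assert (HAM : 0 <= A / M <= R - S).
{ split; [unfold Rdiv; apply Rmult_le_pos; [lra|apply Rlt_le, Rinv_0_lt_compat; lra]|].
  apply Rmult_le_reg_r with M; [lra|]; unfold Rdiv; rewrite Rmult_assoc, Rinv_l; lra. }
assert (HAm : R - S <= A / m).
{ apply Rmult_le_reg_r with m; [lra|]; unfold Rdiv; rewrite Rmult_assoc, Rinv_l; lra. }
replace (A ^ 2 / M ^ 2 + 2 * A / M * S) with (A / M * (A / M) + 2 * (A / M) * S) by (field; lra).
replace (A ^ 2 / m ^ 2 + 2 * A / m * S) with (A / m * (A / m) + 2 * (A / m) * S) by (field; lra).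
split; nra.
Qed.

Lemma diff_sqr_bounds_of_gap R S D m M : 0 < R -> 0 <= S -> 0 < m -> 0 < M -> 0 <= D ->
  4 * m * (2 - 2 * (S / R)) <= D <= 4 * M * (2 - 2 * (S / R)) ->
  let A := / 8 * R * D in
  A ^ 2 / M ^ 2 + 2 * A / M * S <= R * R - S * S <= A ^ 2 / m ^ 2 + 2 * A / m * S.
Proof.
intros HR HS Hm HM HD [Hlo Hhi] A.
apply diff_sqr_bounds; auto.
- unfold A; apply Rmult_le_pos; lra.
- unfold A.
  replace (m * (R - S)) with (/ 8 * R * (4 * m * (2 - 2 * (S / R)))) by (field; lra).
  replace (M * (R - S)) with (/ 8 * R * (4 * M * (2 - 2 * (S / R)))) by (field; lra).
  split; apply Rmult_le_compat_l; lra.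
Qed.

Theorem mainTheorem5 (n : nat) (x a : nat -> R)
  (hn : (1 <= n)%nat)
  (hx : forall i, (i < n)%nat -> x i <> 0)
  (ha : forall i, (i < n)%nat -> 0 < a i) :
  let P := rsum n (fun j => x j ^ 2 / a j) in
  let Q := rsum n (fun j => a j) in
  let A := / 8 * sqrt (P * Q) *
           rsum n (fun i => (x i ^ 2 / (a i * P) - a i / Q) ^ 2) in
  let m := rmin_upto (n - 1) (fun i => Rmin (x i ^ 2 / (a i * P)) (a i / Q)) in
  let M := rmax_upto (n - 1) (fun i => Rmax (x i ^ 2 / (a i * P)) (a i / Q)) in
  let S := rsum n (fun i => Rabs (x i)) in
  / Q * (A ^ 2 / M ^ 2 + 2 * A / M * S)
    <= rsum n (fun i => x i ^ 2 / a i) - S ^ 2 / Q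
  /\ rsum n (fun i => x i ^ 2 / a i) - S ^ 2 / Q
    <= / Q * (A ^ 2 / m ^ 2 + 2 * A / m * S).
Proof.
intros P Q A m M S.
assert (Hx2 : forall i, (i < n)%nat -> 0 < x i ^ 2)
  by (intros i Hi; rewrite <- Rsqr_pow2; apply Rsqr_pos_lt, hx, Hi).
assert (HP : 0 < P) by (apply rsum_pos; [|intros i Hi; apply Rdiv_lt_0_compat]; auto).
assert (HQ : 0 < Q) by (apply rsum_pos; auto).
set (R := sqrt (P * Q)).
assert (HR : 0 < R) by (apply sqrt_lt_R0; nra).
pose (p i := x i ^ 2 / (a i * P)).
pose (q i := a i / Q).
pose (t i := Rabs (x i) / R).
assert (Hp0 : forall i, (i < n)%nat -> 0 < p i)
  by (intros i Hi; apply Rdiv_lt_0_compat; [|apply Rmult_lt_0_compat]; auto).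
assert (Hq0 : forall i, (i < n)%nat -> 0 < q i) by (intros; apply Rdiv_lt_0_compat; auto).
assert (Hm : 0 < m)
  by (apply rmin_upto_pos; intros i Hi; apply Rmin_glb_lt; [apply Hp0|apply Hq0]; lia).
assert (Hpq : forall i, (i < n)%nat -> m <= p i <= M /\ m <= q i <= M)
  by (intros i Hi; apply rmin_rmax_upto_bounds; lia).
assert (HM : 0 < M) by (destruct (Hpq 0%nat hn) as [[_ HpM] _]; pose proof (Hp0 0%nat hn); lra).
assert (Hsp : rsum n p = 1).
{ rewrite (rsum_ext n p (fun i => x i ^ 2 / a i / P)).
  - apply rsum_normalize; [lra|reflexivity].
  - intros i Hi; pose proof (ha i Hi); unfold p; field; lra. }
assert (Hsq : rsum n q = 1) by (apply rsum_normalize; [lra|reflexivity]).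
assert (HSt : rsum n t = S / R) by apply rsum_div.
assert (Ht : forall i, (i < n)%nat -> 0 <= t i)
  by (intros; apply Rmult_le_pos; [apply Rabs_pos|apply Rlt_le, Rinv_0_lt_compat, HR]).
assert (Htt : forall i, (i < n)%nat -> t i * t i = p i * q i)
  by (intros i Hi; apply gm_of_normalized; auto).
destruct (rsum_sqr_sub_bounds n p q t m M (Rlt_le _ _ Hm) (fun i Hi => proj1 (Hpq i Hi))
  (fun i Hi => proj2 (Hpq i Hi)) Ht Htt Hsp Hsq) as [Hlo Hhi].
rewrite HSt in Hlo, Hhi.
assert (HS : 0 <= S) by (apply rsum_nonneg; intros; apply Rabs_pos).
assert (HD : 0 <= rsum n (fun i => (p i - q i) ^ 2))
  by (apply rsum_nonneg; intros; apply pow2_ge_0).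
destruct (diff_sqr_bounds_of_gap R S _ m M HR HS Hm HM HD (conj Hlo Hhi)) as [Hl Hh].
change (rsum n (fun i => x i ^ 2 / a i)) with P.
replace (P - S ^ 2 / Q) with (/ Q * (R * R - S * S))
  by (unfold R; rewrite sqrt_sqrt by nra; field; lra).
split; apply Rmult_le_compat_l; auto; apply Rlt_le, Rinv_0_lt_compat, HQ.
Qed.
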